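(* Fix integers $d\ge 2$ and $n$ with $d+2\leq n\leq 2d$. Every $n$-point softmax code $X$ in $S^{d-1}$ has no softmax rattler.
   Context: $[n]=\{1,\ldots,n\}$. For a configuration $X=\{x_i\}_{i\in[n]}$ in the unit sphere $S^{d-1}\subseteq\mathbb{R}^d$, $\delta(X):=\min_{j\in[n]}\operatorname{dist}(x_j,\operatorname{conv}\{x_i\}_{i\in[n]\setminus\{j\}})$. A softmax code is an $n$-point configuration in $S^{d-1}$ maximizing $\delta$. A softmax rattler of $X$ is an index $j\in[n]$ with $\operatorname{dist}(x_j,\operatorname{conv}\{x_i\}_{i\in[n]\setminus\{j\}})>\delta(X)$. *)

From HB Require Import structures.
From mathcomp Require Import all_boot all_order all_algebra.
From mathcomp Require Import classical_sets reals.
Set Implicit Arguments. Unset Strict Implicit. Unset Printing Implicit Defensive.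
Import Order.TTheory GRing.Theory Num.Theory.
Local Open Scope ring_scope.
Local Open Scope classical_set_scope.

Section Softmax.
Variable R : realType.

Definition enorm (d : nat) (v : 'rV[R]_d) : R :=
  Num.sqrt (\sum_(k < d) v ord0 k ^+ 2).

Definition on_sphere (d : nat) (v : 'rV[R]_d) : Prop := enorm v = 1.

Definition conv_others (d n : nat) (X : 'I_n -> 'rV[R]_d) (j : 'I_n)
  : set 'rV[R]_d :=
  [set y | exists w : 'I_n -> R,
     [/\ forall i, 0 <= w i,
         w j = 0,
         \sum_(i < n) w i = 1 &
         y = \sum_(i < n) w i *: X i]].

Definition dist_set (d : nat) (x : 'rV[R]_d) (C : set 'rV[R]_d) : R :=
  inf [set enorm (x - y) | y in C].

Definition dist_j (d n : nat) (X : 'I_n -> 'rV[R]_d) (j : 'I_n) : R :=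
  dist_set (X j) (conv_others X j).

Definition delta (d n : nat) (X : 'I_n -> 'rV[R]_d) : R :=
  inf [set dist_j X j | j in [set: 'I_n]].

Definition config_on_sphere (d n : nat) (X : 'I_n -> 'rV[R]_d) : Prop :=
  forall i, on_sphere (X i).

Definition softmax_code (d n : nat) (X : 'I_n -> 'rV[R]_d) : Prop :=
  config_on_sphere X /\
  forall Y : 'I_n -> 'rV[R]_d, config_on_sphere Y -> delta Y <= delta X.

Definition softmax_rattler (d n : nat) (X : 'I_n -> 'rV[R]_d) (j : 'I_n) : Prop :=
  dist_j X j > delta X.

End Softmax.

(* The cross-polytope {+-e_k} shows that a softmax code X with n <= 2d points has
   delta(X) >= 1, so each x_i is at distance >= 1 from every convex combination
   of the other points.  If z = sum_i a_i x_i is a convex combination of unit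
   vectors, then sum_i a_i |x_i - z|^2 = 1 - |z|^2; hence z = 0 as soon as z is
   at distance >= 1 from every x_i in its support.  As n >= d + 2, Radon's
   theorem yields z in the hulls of two disjoint sets of points; z lies in the
   hull of the points other than x_i for each x_i of either part, so z = 0.
   Every x_j misses one of the two parts, so 0 is in the hull of the points
   other than x_j and dist(x_j, conv others) <= |x_j| = 1 <= delta(X). *)

From mathcomp Require Import all_boot all_order all_algebra.
From mathcomp Require Import classical_sets reals.
From mathcomp Require Import zify ring lra.
Import Order.TTheory GRing.Theory Num.Theory.
Set Implicit Arguments. Unset Strict Implicit.
Local Open Scope ring_scope.
Local Open Scope classical_set_scope.

Section Softmax.
Variable R : realType.

Definition sqnorm (d : nat) (v : 'rV[R]_d) : R := \sum_(k < d) v 0 k ^+ 2.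

Definition convex_weights (n : nat) (w : 'I_n -> R) : Prop :=
  (forall i, 0 <= w i) /\ \sum_i w i = 1.

Lemma sqnorm_ge0 d (v : 'rV[R]_d) : 0 <= sqnorm v.
Proof. by apply: sumr_ge0 => k _; apply: sqr_ge0. Qed.

Lemma sqr_coord_le_sqnorm d (v : 'rV[R]_d) k : v 0 k ^+ 2 <= sqnorm v.
Proof.
rewrite /sqnorm (bigD1 k) //= lerDl.
by apply: sumr_ge0 => l _; apply: sqr_ge0.
Qed.

Lemma sqnorm_eq0 d (v : 'rV[R]_d) : sqnorm v = 0 -> v = 0.
Proof.
move=> v0; apply/rowP => k; rewrite mxE.
apply/eqP; rewrite -sqrf_eq0; apply/eqP.
by apply: (psumr_eq0P _ v0) => // l _; apply: sqr_ge0.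
Qed.

Lemma on_sphereE d (v : 'rV[R]_d) : on_sphere v <-> sqnorm v = 1.
Proof.
rewrite /on_sphere /enorm -/(sqnorm v); split => [v1|->]; last exact: sqrtr1.
by rewrite -(sqr_sqrtr (sqnorm_ge0 v)) v1 expr1n.
Qed.

Lemma enorm_ge1 d (v : 'rV[R]_d) : (1 <= enorm v) = (1 <= sqnorm v).
Proof. by rewrite /enorm -/(sqnorm v) -{1}sqrtr1 ler_sqrt ?sqnorm_ge0. Qed.

Lemma dist_set_le d (x y : 'rV[R]_d) (C : set 'rV[R]_d) :
  C y -> dist_set x C <= enorm (x - y).
Proof.
move=> Cy; apply: ge_inf; last by exists y.
by exists 0 => _ [z _ <-]; apply: sqrtr_ge0.
Qed.

Lemma dist_set_ge d (x : 'rV[R]_d) (C : set 'rV[R]_d) b :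
  C !=set0 -> (forall y, C y -> b <= enorm (x - y)) -> b <= dist_set x C.
Proof.
move=> [y Cy] lb; apply: lb_le_inf; first by exists (enorm (x - y)), y.
by move=> _ [z Cz <-]; apply: lb.
Qed.

Lemma conv_others_neq0 d n (X : 'I_n -> 'rV[R]_d) j :
  (1 < n)%N -> conv_others X j !=set0.
Proof.
move=> n_gt1.
pose k : 'I_n := if val j == 0%N then Ordinal n_gt1 else Ordinal (ltnW n_gt1).
have kj : k != j.
  by rewrite /k; case: (val j =P 0%N) => j0; apply/eqP => kj; move: j0; rewrite -kj.
exists (\sum_i (i == k)%:R *: X i), (fun i => (i == k)%:R); split => //.
- by rewrite eq_sym (negbTE kj).
- by rewrite (bigD1 k) //= eqxx big1 ?addr0 // => i /negbTE ->.
Qed.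

Lemma delta_le_dist d n (X : 'I_n -> 'rV[R]_d) i :
  (1 < n)%N -> delta X <= dist_j X i.
Proof.
move=> n_gt1; apply: ge_inf; last by exists i.
exists 0 => _ [j _ <-].
by apply: dist_set_ge => [|y _]; [exact: conv_others_neq0 | exact: sqrtr_ge0].
Qed.

Lemma delta_ge d n (X : 'I_n -> 'rV[R]_d) b :
  (0 < n)%N -> (forall i, b <= dist_j X i) -> b <= delta X.
Proof.
move=> n_gt0 lb; apply: lb_le_inf.
  by exists (dist_j X (Ordinal n_gt0)), (Ordinal n_gt0).
by move=> _ [j _ <-]; apply: lb.
Qed.

Lemma far_from_conv_others d n (X : 'I_n -> 'rV[R]_d) :
  (1 < n)%N -> 1 <= delta X ->
  forall i y, conv_others X i y -> 1 <= sqnorm (X i - y).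
Proof.
move=> n_gt1 delta1 i y Cy; rewrite -enorm_ge1.
exact: le_trans delta1 (le_trans (delta_le_dist X i n_gt1) (dist_set_le _ Cy)).
Qed.

Lemma sum_sqnorm_sub_mean d n (x : 'I_n -> 'rV[R]_d) (a : 'I_n -> R) :
  \sum_i a i = 1 ->
  \sum_i a i * sqnorm (x i - \sum_l a l *: x l)
    = \sum_i a i * sqnorm (x i) - sqnorm (\sum_l a l *: x l).
Proof.
move=> a1; set z := \sum_l a l *: x l.
have zk k : z 0 k = \sum_i a i * x i 0 k.
  by rewrite summxE; apply: eq_bigr => i _; rewrite mxE.
transitivity (\sum_k \sum_i (a i * x i 0 k ^+ 2 - 2 * z 0 k * (a i * x i 0 k)
                             + z 0 k ^+ 2 * a i)).
  rewrite exchange_big; apply: eq_bigr => i _.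
  by rewrite mulr_sumr; apply: eq_bigr => k _; rewrite !mxE; ring.
rewrite /sqnorm (eq_bigr (fun i => \sum_k a i * x i 0 k ^+ 2)) => [|i _]; last first.
  by rewrite mulr_sumr.
rewrite [X in X - _]exchange_big -sumrB; apply: eq_bigr => k _ /=.
by rewrite big_split sumrB /= -!mulr_sumr -zk a1; ring.
Qed.

(* sum_i a_i |x_i - z|^2 = 1 - |z|^2, while each term with a_i > 0 is at least a_i. *)
Lemma unit_convex_comb_far_eq0 d n (x : 'I_n -> 'rV[R]_d) (a : 'I_n -> R) :
  (forall i, sqnorm (x i) = 1) -> convex_weights a ->
  (forall i, 0 < a i -> 1 <= sqnorm (x i - \sum_l a l *: x l)) ->
  \sum_l a l *: x l = 0.
Proof.
move=> x1 [a_ge0 a1] far; apply: sqnorm_eq0.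
have mean_sqdist : \sum_i a i * sqnorm (x i - \sum_l a l *: x l)
                   = 1 - sqnorm (\sum_l a l *: x l).
  by rewrite sum_sqnorm_sub_mean // (eq_bigr a) ?a1 // => i _; rewrite x1 mulr1.
have : 1 <= \sum_i a i * sqnorm (x i - \sum_l a l *: x l).
  rewrite -{1}a1; apply: ler_sum => i _.
  have [ai0|ai_neq0] := eqVneq (a i) 0; first by rewrite ai0 mul0r.
  rewrite -{1}(mulr1 (a i)) ler_wpM2l //; apply: far.
  by rewrite lt_def ai_neq0 a_ge0.
rewrite mean_sqdist; have := sqnorm_ge0 (\sum_l a l *: x l); lra.
Qed.

Lemma affine_dependence d n (X : 'I_n -> 'rV[R]_d) : (d.+1 < n)%N ->
  exists c : 'I_n -> R,
    [/\ exists k, c k != 0, \sum_i c i = 0 & \sum_i c i *: X i = 0].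
Proof.
move=> n_gt.
pose M : 'M[R]_(n, d + 1) := row_mx (\matrix_i X i) (const_mx 1).
have /matrix0Pn[i [k cik]] : kermx M != 0.
  by rewrite kermx_eq0 /row_free neq_ltn (leq_ltn_trans (rank_leq_col M)) ?addn1.
have /eqP := congr1 (row i) (mulmx_ker M).
rewrite row_mul row0 mul_mx_row row_mx_eq0 => /andP[/eqP cX /eqP c1].
exists (fun l => kermx M i l); split; first by exists k.
- transitivity ((row i (kermx M) *m (const_mx 1 : 'M_(n, 1))) 0 0).
    by rewrite mxE; apply: eq_bigr => l _; rewrite !mxE mulr1.
  by rewrite c1 mxE.
- rewrite -[RHS]cX mulmx_sum_row; apply: eq_bigr => l _.
  by rewrite rowK [row _ _ _ _]mxE.
Qed.

Lemma radon_partition d n (X : 'I_n -> 'rV[R]_d) : (d.+1 < n)%N ->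
  exists a b : 'I_n -> R,
    [/\ convex_weights a, convex_weights b, forall i, a i * b i = 0
      & \sum_i a i *: X i = \sum_i b i *: X i].
Proof.
move=> n_gt; have [c [[k ck] c0 cX]] := affine_dependence X n_gt.
pose s := \sum_i `|c i|.
have s_gt0 : 0 < s.
  rewrite /s (bigD1 k) //= ltr_pwDl ?normr_gt0 //.
  by apply: sumr_ge0 => i _; apply: normr_ge0.
have s_neq0 : s != 0 by rewrite gt_eqF.
exists (fun i => (`|c i| + c i) / s), (fun i => (`|c i| - c i) / s); split.
- split=> [i|]; last by rewrite -mulr_suml big_split /= c0 addr0 divff.
  by rewrite divr_ge0 ?(ltW s_gt0) //; have := ler_norm (- c i); rewrite normrN; lra.
- split=> [i|]; last by rewrite -mulr_suml sumrB c0 subr0 divff.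
  by rewrite divr_ge0 ?(ltW s_gt0) // subr_ge0 ler_norm.
- move=> i; rewrite mulrACA [(_ + _) * _]mulrC -subr_sqr.
  by rewrite real_normK ?num_real // subrr mul0r.
- apply/eqP; rewrite -subr_eq0 -sumrB.
  rewrite (eq_bigr (fun i => (2 / s) *: (c i *: X i))) => [|i _].
    by rewrite -scaler_sumr cX scaler0.
  by rewrite -scalerBl scalerA; congr (_ *: _); field.
Qed.

Lemma zero_in_conv_others d n (X : 'I_n -> 'rV[R]_d) : (d.+1 < n)%N ->
  (forall i, sqnorm (X i) = 1) ->
  (forall i y, conv_others X i y -> 1 <= sqnorm (X i - y)) ->
  forall j, conv_others X j 0.
Proof.
move=> n_gt X1 far j.
have [a [b [[a_ge0 a1] [b_ge0 b1] ab0 aXbX]]] := radon_partition X n_gt.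
have support_disjoint (u v : 'I_n -> R) i : u i * v i = 0 -> 0 < u i -> v i = 0.
  by move/eqP; rewrite mulf_eq0 => /orP[/eqP-> | /eqP//]; rewrite ltxx.
have aX0 : \sum_i a i *: X i = 0.
  apply: unit_convex_comb_far_eq0 => // i ai_gt0; rewrite aXbX; apply: far.
  by exists b; split => //; apply: support_disjoint ai_gt0.
have bX0 : \sum_i b i *: X i = 0.
  apply: unit_convex_comb_far_eq0 => // i bi_gt0; rewrite -aXbX; apply: far.
  by exists a; split => //; apply: (support_disjoint b); rewrite // mulrC.
have /eqP := ab0 j; rewrite mulf_eq0 => /orP[/eqP aj0 | /eqP bj0].
- by exists a; split.
- by exists b; split.
Qed.

Section Orthoplex.
Variables d n : nat.
Hypothesis d_gt0 : (0 < d)%N.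
Hypothesis n_le : (n <= 2 * d)%N.

Definition orthoplex_sign (i : 'I_n) : R := (-1) ^+ (i %/ d).
Definition orthoplex_axis (i : 'I_n) : 'I_d := Ordinal (ltn_pmod i d_gt0).
Definition orthoplex (i : 'I_n) : 'rV[R]_d :=
  orthoplex_sign i *: delta_mx 0 (orthoplex_axis i).

Lemma orthoplex_sign_sqr i : orthoplex_sign i ^+ 2 = 1.
Proof. exact: sqrr_sign. Qed.

Lemma orthoplex_sign_opp i j : i != j ->
  orthoplex_axis i = orthoplex_axis j -> orthoplex_sign i = - orthoplex_sign j.
Proof.
move=> ij /(congr1 val) /= ij_mod.
have q_lt2 (l : 'I_n) : (l %/ d < 2)%N.
  by rewrite ltn_divLR // (leq_trans (ltn_ord l)).
have ij_div : (i %/ d)%N != (j %/ d)%N.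
  apply: contra ij => /eqP ij_div.
  by apply/eqP/val_inj; rewrite /= (divn_eq i d) (divn_eq j d) ij_div ij_mod.
move: (q_lt2 i) (q_lt2 j) ij_div; rewrite /orthoplex_sign.
by case: (i %/ d)%N => [|[|]] //; case: (j %/ d)%N => [|[|]] //;
  rewrite ?expr0 ?expr1 ?opprK.
Qed.

Lemma sqnorm_orthoplex i : sqnorm (orthoplex i) = 1.
Proof.
rewrite /sqnorm (bigD1 (orthoplex_axis i)) //= big1 => [|k ki].
  by rewrite !mxE !eqxx mulr1 orthoplex_sign_sqr addr0.
by rewrite !mxE (negbTE ki) mulr0 expr0n.
Qed.

Lemma orthoplex_coord_le0 i j : i != j ->
  orthoplex_sign j * orthoplex i 0 (orthoplex_axis j) <= 0.
Proof.
move=> ij; rewrite !mxE eqxx /=; case: eqP => [axji|_]; last by rewrite !mulr0.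
rewrite mulr1 (orthoplex_sign_opp ij) // mulrN -expr2 orthoplex_sign_sqr.
by rewrite lerN10.
Qed.

Lemma delta_orthoplex_ge1 : (1 < n)%N -> 1 <= delta orthoplex.
Proof.
move=> n_gt1; apply: delta_ge (ltnW n_gt1) _ => j.
apply: dist_set_ge; first exact: conv_others_neq0.
move=> _ [w [w_ge0 wj _ ->]]; rewrite enorm_ge1.
set k := orthoplex_axis j; set v := orthoplex j - _.
have sep : 1 <= orthoplex_sign j * v 0 k.
  rewrite /v /k !mxE summxE !eqxx mulr1 mulrBr -expr2 orthoplex_sign_sqr mulr_sumr.
  rewrite lerDl oppr_ge0; apply: sumr_le0 => i _; rewrite mxE mulrCA.
  have [->|ij] := eqVneq i j; first by rewrite wj mul0r.
  by apply: mulr_ge0_le0; [exact: w_ge0 | exact: orthoplex_coord_le0].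
apply: le_trans (sqr_coord_le_sqnorm v k).
have -> : v 0 k ^+ 2 = (orthoplex_sign j * v 0 k) ^+ 2.
  by rewrite exprMn orthoplex_sign_sqr mul1r.
exact: exprn_ege1.
Qed.

End Orthoplex.

Lemma softmax_code_delta_ge1 d n (X : 'I_n -> 'rV[R]_d) :
  (0 < d)%N -> (1 < n)%N -> (n <= 2 * d)%N -> softmax_code X -> 1 <= delta X.
Proof.
move=> d_gt0 n_gt1 n_le [_ maxX]; apply: le_trans (maxX _ _).
  exact: delta_orthoplex_ge1.
by move=> i; apply/on_sphereE/sqnorm_orthoplex.
Qed.

End Softmax.

Unset Implicit Arguments.
Set Strict Implicit.

Theorem lemma8 (R : realType) (d n : nat) :
  (2 <= d)%N -> (d + 2 <= n)%N -> (n <= 2 * d)%N ->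
  forall X : 'I_n -> 'rV[R]_d, softmax_code X ->
  forall j : 'I_n, ~ softmax_rattler X j.
Proof.
move=> d_ge2 n_ge n_le X codeX j.
have d_gt0 : (0 < d)%N by lia.
have n_gt1 : (1 < n)%N by lia.
have n_gt : (d.+1 < n)%N by lia.
have delta1 := softmax_code_delta_ge1 d_gt0 n_gt1 n_le codeX.
have X1 i : sqnorm (X i) = 1 by apply/on_sphereE; case: codeX.
have far := far_from_conv_others n_gt1 delta1.
have := dist_set_le (X j) (zero_in_conv_others n_gt X1 far j).
rewrite subr0 (proj1 codeX j) => dist1.
by apply/negP; rewrite /softmax_rattler -leNgt (le_trans dist1 delta1).
Qed.
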